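(* Let $X$ be a compact Hausdorff space, $Y$ a normed linear space over $\mathbb{R}$ with norm $\|\cdot\|$, and $C(X,Y)$ the space of continuous functions $X\to Y$ equipped with the uniform norm $|||f||| = \max_{x\in X}\|f(x)\|$. Let $H\subset C(X,Y)$ be a linear subspace of finite dimension $n\ge 1$. Let $A$ be a compact Hausdorff topological space and $\{f_a\}_{a\in A}\subset C(X,Y)$ a family such that the map $A\to C(X,Y)$, $a\mapsto f_a$, is continuous (with respect to the uniform norm). Then $f^*\in H$ is a best simultaneous approximation to $\{f_a\}_{a\in A}$ from $H$, i.e. $$\max_{a\in A}|||f_a-f^*|||\le \max_{a\in A}|||f_a-f|||\quad\text{for all } f\in H,$$ if and only if there exist an integer $k$ with $1\le k\le n+1$, elements $a_1,\dots,a_k\in A$, points $x_1,\dots,x_k\in X$, and positive numbers $\lambda_1,\dots,\lambda_k$ with $\sum_{i=1}^k\lambda_i=1$ such that (i) $\sum_{i=1}^k\lambda_i\|f_{a_i}(x_i)-f^*(x_i)\|\le \sum_{i=1}^k\lambda_i\|f_{a_i}(x_i)-f(x_i)\|$ for all $f\in H$; and (ii) $\|f_{a_i}(x_i)-f^*(x_i)\| = |||f_{a_i}-f^*||| = \max_{a\in A}|||f_a-f^*|||$ for all $i$ with $1\le i\le k$. *)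

From HB Require Import structures.
From mathcomp Require Import all_boot all_order all_algebra.
From mathcomp Require Import all_classical all_reals all_analysis.
Set Implicit Arguments. Unset Strict Implicit. Unset Printing Implicit Defensive.
Import Order.TTheory GRing.Theory Num.Theory.
Import numFieldNormedType.Exports.
Local Open Scope classical_set_scope.
Local Open Scope ring_scope.

(* uniform norm |||f||| = max_{x in X} ||f x|| (a max for continuous f on compact X) *)
Definition unorm {R : realType} {X : topologicalType} {Y : normedModType R}
  (f : X -> Y) : R := sup (range (fun x => `|f x|)).

Definition sdev {R : realType} {X : topologicalType} {Y : normedModType R}
  {A : Type} (f : A -> X -> Y) (h : X -> Y) : R :=
  sup (range (fun a => unorm (fun x => f a x - h x))).

Definition inSpan {R : realType} {X : Type} {Y : normedModType R} {n : nat}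
  (g : 'I_n -> X -> Y) (h : X -> Y) : Prop :=
  exists c : 'I_n -> R, h = (fun x => \sum_(i < n) c i *: g i x).

(* g_0, ..., g_{n-1} are linearly independent (so span g has dimension n) *)
Definition lin_indep {R : realType} {X : Type} {Y : normedModType R} {n : nat}
  (g : 'I_n -> X -> Y) : Prop :=
  forall c : 'I_n -> R, (forall x, \sum_(i < n) c i *: g i x = 0) ->
    forall i, c i = 0.

From HB Require Import structures.
From mathcomp Require Import all_boot all_order all_algebra.
From mathcomp Require Import all_classical all_reals all_analysis.
From mathcomp Require Import lra ring.
Set Implicit Arguments. Unset Strict Implicit. Unset Printing Implicit Defensive.
Import Order.TTheory GRing.Theory Num.Theory.
Import numFieldNormedType.Exports.
Local Open Scope classical_set_scope.
Local Open Scope ring_scope.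

(* Write the elements of H as fstar + sum_i c_i g_i with c in R^n and let
   psi_(a,x)(c) = ||f_a(x) - fstar(x) - sum_i c_i g_i(x)|| - E, where E is the optimal
   deviation.  Each psi_p is convex, continuous in p on the compact A x X, psi_p(0) <= 0,
   and optimality of fstar says max_p psi_p(c) >= 0 for every c.  For each direction d,
   compactness gives an active p (psi_p(0) = 0) with psi_p >= 0 along the ray R+ d, and
   Hahn-Banach gives a subgradient w of psi_p at 0 with w.d >= 0.  These subgradients form
   a compact set meeting every half-space {w.d >= 0}, so by the minimum-norm point argument
   and Caratheodory 0 is a convex combination of n + 1 of them; the weights, with the zero
   ones dropped, are the lambda_i.  Conversely
   E = sum lambda_i ||f_ai(x_i) - fstar(x_i)|| <= sum lambda_i ||f_ai(x_i) - f(x_i)||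
     <= max_a |||f_a - f|||. *)

Lemma continuous_sum (K : numFieldType) (V : normedModType K)
    (T : topologicalType) (I : Type) (r : seq I) (P : pred I) (F : I -> T -> V) :
  (forall i, continuous (F i)) -> continuous (fun x => \sum_(i <- r | P i) F i x).
Proof.
move=> Fc; elim: r => [|i r IH].
  by under eq_fun do rewrite big_nil; exact: cst_continuous.
under eq_fun do rewrite big_cons; case: (P i) => //.
by move=> x; apply: continuousD; [exact: Fc|exact: IH].
Qed.

Section DotProduct.
Context {R : realType} {n : nat}.
Implicit Types u v w : 'rV[R]_n.

Definition dotv u v : R := \sum_i u ord0 i * v ord0 i.

Lemma dotvC u v : dotv u v = dotv v u.
Proof. by apply: eq_bigr => i _; rewrite mulrC. Qed.

Lemma dotvDr u v w : dotv u (v + w) = dotv u v + dotv u w.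
Proof. by rewrite /dotv -big_split; apply: eq_bigr => i _; rewrite mxE mulrDr. Qed.

Lemma dotvZr u k v : dotv u (k *: v) = k * dotv u v.
Proof. by rewrite /dotv mulr_sumr; apply: eq_bigr => i _; rewrite mxE mulrCA. Qed.

Lemma dotvNr u v : dotv u (- v) = - dotv u v.
Proof. by rewrite -scaleN1r dotvZr mulN1r. Qed.

Lemma dotvBr u v w : dotv u (v - w) = dotv u v - dotv u w.
Proof. by rewrite dotvDr dotvNr. Qed.

Lemma dotv0r u : dotv u 0 = 0.
Proof. by rewrite -(scale0r 0) dotvZr mul0r. Qed.

Lemma dotvDl u v w : dotv (u + v) w = dotv u w + dotv v w.
Proof. by rewrite !(dotvC _ w) dotvDr. Qed.

Lemma dotvZl k u v : dotv (k *: u) v = k * dotv u v.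
Proof. by rewrite !(dotvC _ v) dotvZr. Qed.

Lemma dotv0l u : dotv 0 u = 0.
Proof. by rewrite dotvC dotv0r. Qed.

Lemma dotv_suml (I : Type) (r : seq I) (F : I -> 'rV[R]_n) v :
  dotv (\sum_(i <- r) F i) v = \sum_(i <- r) dotv (F i) v.
Proof.
rewrite /dotv exchange_big /=; apply: eq_bigr => j _.
by rewrite summxE mulr_suml.
Qed.

Lemma dotvv_ge0 u : 0 <= dotv u u.
Proof. by rewrite sumr_ge0 // => i _; rewrite -expr2 sqr_ge0. Qed.

Lemma dotvv_eq0 u : (dotv u u == 0) = (u == 0).
Proof.
apply/idP/eqP => [|->]; last by rewrite dotv0r.
rewrite psumr_eq0 => [/allP u0|i _]; last by rewrite -expr2 sqr_ge0.
apply/rowP => i; rewrite mxE.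
by have := u0 i (mem_index_enum _); rewrite -expr2 sqrf_eq0 => /eqP.
Qed.

Lemma dotv_delta u (j : 'I_n) : dotv u (\row_k (k == j)%:R) = u ord0 j.
Proof.
rewrite /dotv (bigD1 j) //= big1 ?addr0 => [|i /negbTE ne]; last first.
  by rewrite mxE ne mulr0.
by rewrite mxE eqxx mulr1.
Qed.

Lemma dotv_continuousl v : continuous (fun u => dotv u v).
Proof.
apply: continuous_sum => i u.
by apply: continuousM; [exact: coord_continuous|exact: cst_continuous].
Qed.

Lemma dotvv_continuous : continuous (fun u => dotv u u).
Proof.
apply: continuous_sum => i u.
by apply: continuousM; exact: coord_continuous.
Qed.

End DotProduct.

Section SublinearDomination.
Context {R : realType} {n : nat} (q : 'rV[R]_n -> R).
Hypothesis qD : forall a b, q (a + b) <= q a + q b.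
Hypothesis qZ : forall (l : R) a, 0 < l -> l * q a <= q (l *: a).

Definition vanish_from (j : nat) (c : 'rV[R]_n) :=
  forall i : 'I_n, (j <= i)%N -> c ord0 i = 0.

Lemma vanish_fromZ j k c : vanish_from j c -> vanish_from j (k *: c).
Proof. by move=> c0 i ji; rewrite mxE c0 // mulr0. Qed.

Lemma dominated_extension_value j (e : 'rV[R]_n) w :
  (forall c, vanish_from j c -> dotv w c <= q c) ->
  exists al, forall v t, vanish_from j v -> dotv w v + t * al <= q (v + t *: e).
Proof.
move=> wq; pose S := [set dotv w u - q (u - e) | u in vanish_from j].
have S_ub u' : vanish_from j u' -> ubound S (q (u' + e) - dotv w u').
  move=> u'0 _ [u u0 <-].
  have : dotv w (u + u') <= q (u + u').
    by apply: wq => i ji; rewrite mxE u0 ?u'0 ?addr0.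
  have := qD (u - e) (u' + e); rewrite addrACA addNr addr0 dotvDr; lra.
have vanish0 : vanish_from j 0 by move=> i _; rewrite mxE.
have S_sup : has_sup S.
  by split; [exists (dotv w 0 - q (0 - e)), 0 | exists (q (0 + e) - dotv w 0); exact: S_ub].
exists (sup S) => v t v0.
have [t_lt0|t_gt0|->] := ltrgtP t 0; last 1 first.
- by rewrite mul0r addr0 scale0r addr0; exact: wq.
- pose u := (- t)^-1 *: v.
  have vE : v = (- t) *: u by rewrite scalerA mulfV ?scale1r // oppr_eq0 lt_eqF.
  have lower : dotv w u - q (u - e) <= sup S.
    by apply: sup_upper_bound => //; exists u => //; exact: vanish_fromZ.
  rewrite -oppr_gt0 in t_lt0; have := qZ (u - e) t_lt0.
  rewrite scalerBr -vE scaleNr opprK vE dotvZr; nra.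
- pose u := t^-1 *: v.
  have vE : v = t *: u by rewrite scalerA mulfV ?scale1r // gt_eqF.
  have upper : sup S <= q (u + e) - dotv w u.
    by apply: ge_sup; [exists (dotv w 0 - q (0 - e)), 0|apply: S_ub; exact: vanish_fromZ].
  have := qZ (u + e) t_gt0; rewrite scalerDr -vE vE dotvZr; nra.
Qed.

Lemma dominated_extension_step j w : (j < n)%N ->
  (forall c, vanish_from j c -> dotv w c <= q c) ->
  exists w', forall c, vanish_from j.+1 c -> dotv w' c <= q c.
Proof.
move=> ltjn wq; pose J := Ordinal ltjn; pose e : 'rV[R]_n := \row_i (i == J)%:R.
have [al ext] := dominated_extension_value e wq.
exists (w + (al - w ord0 J) *: e) => c c0.
pose v := c - c ord0 J *: e.
have v0 : vanish_from j v.
  move=> i ji; rewrite !mxE; have [->|iJ] := eqVneq i J; first by rewrite mulr1 subrr.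
  rewrite mulr0 subr0 c0 // ltn_neqAle ji andbT.
  by apply: contra iJ => /eqP jiE; apply/eqP/val_inj.
have -> : dotv (w + (al - w ord0 J) *: e) c = dotv w v + c ord0 J * al.
  rewrite dotvDl dotvZl (dotvC e) dotv_delta dotvBr dotvZr dotv_delta; ring.
by rewrite -[X in q X](subrK (c ord0 J *: e)) ext.
Qed.

Lemma sublinear_dominates_linear : exists w, forall c, dotv w c <= q c.
Proof.
suff /(_ n (leqnn n)) [w wq] : forall j, (j <= n)%N ->
    exists w, forall c, vanish_from j c -> dotv w c <= q c.
  by exists w => c; apply: wq => i; rewrite leqNgt ltn_ord.
elim=> [_|j IH ltjn].
  exists 0 => c c0; have -> : c = 0 by apply/rowP => i; rewrite mxE c0.
  by rewrite dotv0l; have := qD 0 0; rewrite addr0; lra.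
by have [w wq] := IH (ltnW ltjn); exact: dominated_extension_step wq.
Qed.

End SublinearDomination.

Definition ocons {T : Type} {k : nat} (a : T) (f : 'I_k -> T) (j : 'I_k.+1) : T :=
  if unlift ord0 j is Some i then f i else a.

Lemma ocons0 {T : Type} {k : nat} (a : T) (f : 'I_k -> T) : ocons a f ord0 = a.
Proof. by rewrite /ocons unlift_none. Qed.

Lemma oconsS {T : Type} {k : nat} (a : T) (f : 'I_k -> T) i : ocons a f (lift ord0 i) = f i.
Proof. by rewrite /ocons liftK. Qed.

Section Caratheodory.
Context {R : realType} {n : nat}.
Implicit Types W : set 'rV[R]_n.

Definition convn W (k : nat) : set 'rV[R]_n :=
  [set z | exists (lam : 'I_k -> R) (w : 'I_k -> 'rV[R]_n),
     [/\ forall i, 0 <= lam i, \sum_i lam i = 1, forall i, W (w i) &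
         z = \sum_i lam i *: w i]].

Lemma affine_dependence k (w : 'I_k.+1 -> 'rV[R]_n) : (n < k)%N ->
  exists mu : 'I_k.+1 -> R, [/\ exists j, 0 < mu j, \sum_j mu j = 0 &
                              \sum_j mu j *: w j = 0].
Proof.
move=> ltnk; pose M : 'M[R]_(k, n) := \matrix_i (w (lift ord0 i) - w ord0).
have /matrix0Pn [i0 [j0 K_neq0]] : kermx M != 0.
  apply: contraTneq ltnk => K0; have := mxrank_ker M.
  rewrite K0 mxrank0 => /esym/eqP; rewrite subn_eq0 -leqNgt => kM.
  exact: leq_trans kM (rank_leq_col M).
have nu_neq0 : row i0 (kermx M) != 0 by apply/matrix0Pn; exists ord0, j0; rewrite mxE.
pose nu := row i0 (kermx M).
have nuM : \sum_i nu ord0 i *: (w (lift ord0 i) - w ord0) = 0.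
  have nuM : nu *m M = 0 by rewrite -row_mul mulmx_ker row0.
  by rewrite -[RHS]nuM mulmx_sum_row; apply: eq_bigr => i _; rewrite rowK.
pose mu := ocons (- \sum_i nu ord0 i) (fun i => nu ord0 i).
have muL i : mu (lift ord0 i) = nu ord0 i := oconsS _ _ i.
have mu0 : mu ord0 = - \sum_i nu ord0 i := ocons0 _ _.
have sum_mu : \sum_j mu j = 0.
  by rewrite big_ord_recl; under eq_bigr do rewrite muL; rewrite mu0 addNr.
exists mu; split => //.
  apply/existsP; apply: contraNT nu_neq0 => /existsPn mu_le0.
  have mu0j j : mu j = 0.
    apply/eqP; move/eqP: sum_mu; rewrite -oppr_eq0 -sumrN psumr_eq0.
      by move=> /allP/(_ j (mem_index_enum _)); rewrite oppr_eq0.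
    by move=> i _; rewrite oppr_ge0 leNgt mu_le0.
  by apply/eqP/rowP => i; rewrite -[nu _ _]muL mu0j mxE.
rewrite big_ord_recl; under eq_bigr do rewrite muL.
rewrite mu0 -[RHS]nuM scaleNr scaler_suml addrC -sumrB.
by apply: eq_bigr => i _; rewrite scalerBr.
Qed.

Lemma convn_shrink W k : (n < k)%N -> convn W k.+1 `<=` convn W k.
Proof.
move=> ltnk z [lam [w [lam_ge0 lam1 Ww ->]]].
have [mu [[jp mu_jp] mu0 muw0]] := affine_dependence w ltnk.
pose j0 := [arg min_(j < jp | 0 < mu j) (lam j / mu j)]%O.
have [mu_j0 j0_min] : 0 < mu j0 /\ forall j, 0 < mu j -> lam j0 / mu j0 <= lam j / mu j.
  by rewrite /j0; case: arg_minP => //= j Pj Hj; split => // j' /Hj.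
pose th := lam j0 / mu j0; pose lam' j := lam j - th * mu j.
have lam'_ge0 j : 0 <= lam' j.
  rewrite subr_ge0; have [mu_j|] := ltrP 0 (mu j).
    by rewrite -ler_pdivlMr //; exact: j0_min.
  by move=> mu_j; apply: le_trans (lam_ge0 j); rewrite mulr_ge0_le0 // divr_ge0 // ltW.
have lam'_j0 : lam' j0 = 0 by rewrite /lam' /th divfK ?subrr // gt_eqF.
have lam'1 : \sum_j lam' j = 1 by rewrite sumrB -mulr_sumr mu0 mulr0 subr0.
have lam'w : \sum_j lam' j *: w j = \sum_j lam j *: w j.
  under eq_bigr do rewrite scalerBl -scalerA.
  by rewrite sumrB -scaler_sumr muw0 scaler0 subr0.
exists (fun i => lam' (lift j0 i)), (fun i => w (lift j0 i)); split => //.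
  by rewrite -lam'1 (bigD1_ord j0) //= lam'_j0 add0r.
by rewrite -lam'w (bigD1_ord j0) //= lam'_j0 scale0r add0r.
Qed.

End Caratheodory.

Section SegmentHull.
Context {R : realType} {n : nat} (W : set 'rV[R]_n).

(* seg_hull k is convn W k.+1 (for nonempty W) built from iterated segments, so that its
   compactness follows from that of W. *)
Fixpoint seg_hull (k : nat) : set 'rV[R]_n :=
  if k is k'.+1 then
    (fun x : ('rV[R]_n * 'rV[R]_n) * R => (1 - x.2) *: x.1.1 + x.2 *: x.1.2) @`
      ((seg_hull k' `*` W) `*` `[(0:R), 1]%classic)
  else W.

Lemma seg_hull_compact k : compact W -> compact (seg_hull k).
Proof.
move=> cW; elim: k => [//|k IH] /=.
apply: continuous_compact; last first.
  by apply: compact_setX; [exact: compact_setX|exact: segment_compact].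
apply: continuous_subspaceT => x.
apply: cvgD; apply: cvgZ.
- by apply: cvgB; [exact: cvg_cst|exact: cvg_snd].
- exact: cvg_comp cvg_fst cvg_fst.
- exact: cvg_snd.
- exact: cvg_comp cvg_fst cvg_snd.
Qed.

Lemma sub_seg_hull k : W `<=` seg_hull k.
Proof.
move=> w0 Ww0; elim: k => [//|k IH] /=; exists ((w0, w0), 0).
  by split; [split|rewrite /= in_itv /= lexx ler01].
by rewrite /= scale0r addr0 subr0 scale1r.
Qed.

Lemma seg_hull_sub_convn k : seg_hull k `<=` convn W k.+1.
Proof.
elim: k => [|k IH] z.
  move=> Wz; exists (fun _ => 1), (fun _ => z).
  by split=> //; rewrite big_ord1 // scale1r.
move=> [[[u w] s] [[Cu Ww] /andP[/= s_ge0 s_le1]] <-] /=.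
have [lam [ws [lam_ge0 lam1 Wws ->]]] := IH u Cu.
exists (ocons s (fun i => (1 - s) * lam i)), (ocons w ws); split.
- by move=> j; rewrite /ocons; case: unlift => // i; rewrite mulr_ge0 ?subr_ge0.
- rewrite big_ord_recl ocons0; under eq_bigr do rewrite oconsS.
  by rewrite -mulr_sumr lam1 mulr1 addrC subrK.
- by move=> j; rewrite /ocons; case: unlift.
rewrite [RHS]big_ord_recl !ocons0 addrC; under [X in _ = _ + X]eq_bigr do rewrite !oconsS.
by rewrite scaler_sumr; congr (_ + _); apply: eq_bigr => i _; rewrite scalerA.
Qed.

Lemma convn_sub_seg_hull k : W !=set0 -> convn W k.+1 `<=` seg_hull k.
Proof.
move=> [w0 Ww0]; elim: k => [|k IH] z [lam [ws [lam_ge0 lam1 Wws ->]]].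
  by move: lam1; rewrite !big_ord1 => ->; rewrite scale1r.
move: lam1; rewrite big_ord_recl [X in seg_hull _ X]big_ord_recl.
set s := lam ord0; set S := \sum_(i < k.+1) _ => lam1.
have S_ge0 : 0 <= S by apply: sumr_ge0.
have [s1|s_neq1] := eqVneq s 1.
  have /eqP : S = 0 by lra.
  rewrite psumr_eq0 // => /allP S0; rewrite s1 big1 ?addr0 => [|i _]; last first.
    by have /eqP -> := S0 i (mem_index_enum _); rewrite scale0r.
  exists ((w0, ws ord0), 1); last by rewrite /= subrr scale0r add0r scale1r.
  by split; [split; [exact: sub_seg_hull|exact: Wws]|rewrite /= in_itv /= ler01 lexx].
have S_gt0 : 0 < S.
  by rewrite lt_neqAle S_ge0 andbT eq_sym; apply: contra s_neq1 => /eqP S0; lra.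
pose u := \sum_(i < k.+1) (lam (lift ord0 i) / S) *: ws (lift ord0 i).
have Cu : seg_hull k u.
  apply: IH; exists (fun i => lam (lift ord0 i) / S), (fun i => ws (lift ord0 i)).
  by split=> // [i|]; [rewrite divr_ge0 | rewrite -mulr_suml mulfV ?gt_eqF].
exists ((u, ws ord0), s).
  by split; [split; [exact: Cu|exact: Wws]|rewrite /= in_itv /= lam_ge0 /=; lra].
rewrite /= addrC (_ : 1 - s = S); last by lra.
rewrite /u scaler_sumr; congr (_ + _); apply: eq_bigr => i _.
by rewrite scalerA mulrC divfK // gt_eqF.
Qed.

End SegmentHull.

Lemma min_norm_segment {R : realType} {n : nat} (z w : 'rV[R]_n) :
  (forall s, 0 < s <= 1 -> dotv z z <= dotv (z + s *: (w - z)) (z + s *: (w - z))) ->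
  dotv z z <= dotv z w.
Proof.
move=> zmin; pose a := dotv z (w - z); pose D := dotv (w - z) (w - z).
have expand s : dotv (z + s *: (w - z)) (z + s *: (w - z)) = dotv z z + 2 * s * a + s ^+ 2 * D.
  by rewrite !dotvDl !dotvDr !dotvZl !dotvZr (dotvC (w - z) z) -/a -/D; ring.
have D_ge0 : 0 <= D := dotvv_ge0 _.
suff a_ge0 : 0 <= a by rewrite -[w](subrK z) dotvDr -/a; lra.
rewrite leNgt; apply/negP => a_lt0.
(* for this s, 2 s a + s^2 D = s a (1 + s) < 0 *)
pose s := - a / (D - a).
have sDa : s * (D - a) = - a by rewrite /s divfK // gt_eqF //; lra.
have s_gt0 : 0 < s by rewrite /s divr_gt0 ?oppr_gt0 //; lra.
have s_le1 : s <= 1 by rewrite /s ler_pdivrMr ?mul1r; lra.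
have := zmin s; rewrite s_gt0 s_le1 expand => /(_ isT).
have -> : dotv z z + 2 * s * a + s ^+ 2 * D = dotv z z + s * a * (1 + s).
  have -> : s ^+ 2 * D = s * (s * (D - a)) + s ^+ 2 * a by ring.
  by rewrite sDa; ring.
rewrite lerDl pmulr_lge0 ?pmulr_rge0 //; lra.
Qed.

Lemma gordan {R : realType} {n : nat} (W : set 'rV[R]_n) :
  compact W -> W !=set0 -> (forall d, exists2 w, W w & 0 <= dotv w d) ->
  convn W n.+1 0.
Proof.
move=> cW [w0 Ww0] Wd.
have seg_hull_convex z w s : seg_hull W n z -> W w -> 0 <= s <= 1 ->
    seg_hull W n ((1 - s) *: z + s *: w).
  move=> Cz Ww s01; apply: convn_sub_seg_hull; first by exists w0.
  apply: convn_shrink => //; apply: seg_hull_sub_convn.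
  by exists ((z, w), s).
have [z Cz zmin] : exists2 z, seg_hull W n z &
    forall y, seg_hull W n y -> dotv z z <= dotv y y.
  have [z Cz zmin] := compact_EVT_min (ex_intro _ w0 (sub_seg_hull n Ww0))
    (seg_hull_compact (k := n) cW) (continuous_subspaceT dotvv_continuous).
  by exists z; [rewrite inE in Cz|move=> y Cy; apply: zmin; rewrite inE].
have [z0|z_neq0] := eqVneq z 0; first by rewrite -z0; exact: seg_hull_sub_convn.
have z_obtuse w : W w -> dotv z z <= dotv z w.
  move=> Ww; apply: min_norm_segment => s /andP[s_gt0 s_le1]; apply: zmin.
  have -> : z + s *: (w - z) = (1 - s) *: z + s *: w.
    by rewrite scalerBr scalerBl scale1r [LHS]addrCA [LHS]addrC.
  by apply: seg_hull_convex => //; rewrite (ltW s_gt0).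
have [w Ww wz] := Wd (- z).
have zz_gt0 : 0 < dotv z z by rewrite lt_neqAle dotvv_ge0 andbT eq_sym dotvv_eq0.
by have := z_obtuse w Ww; rewrite dotvNr dotvC in wz; lra.
Qed.

Definition convex_fun {R : numDomainType} {V : lmodType R} (phi : V -> R) :=
  forall a b s, 0 <= s <= 1 -> phi ((1 - s) *: a + s *: b) <= (1 - s) * phi a + s * phi b.

Section ConvexFunction.
Context {R : realFieldType} {V : lmodType R} (phi : V -> R).
Hypothesis phi_convex : convex_fun phi.

Lemma convex_midpoint a b : phi (2^-1 *: (a + b)) <= 2^-1 * (phi a + phi b).
Proof.
have half : 1 - 2^-1 = 2^-1 :> R by field.
have := phi_convex a b (s := 2^-1); rewrite half scalerDr mulrDr; apply.
by rewrite invr_ge0 ler0n /= invf_le1 ?ler1n.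
Qed.

Lemma convex_slope_le x m s : phi 0 = 0 -> 0 < m -> m <= s ->
  phi (m *: x) / m <= phi (s *: x) / s.
Proof.
move=> phi0 m_gt0 ms; have s_gt0 : 0 < s := lt_le_trans m_gt0 ms.
have ms01 : 0 <= m / s <= 1.
  by rewrite divr_ge0 ?(ltW m_gt0) ?(ltW s_gt0) // ler_pdivrMr // mul1r.
have := phi_convex 0 (s *: x) ms01.
rewrite scaler0 add0r scalerA divfK ?gt_eqF // phi0 mulr0 add0r => h.
by rewrite ler_pdivrMr //; lra.
Qed.

Lemma convex_neg_near0 d : phi 0 < 0 -> exists2 t, 0 < t & phi (t *: d) < 0.
Proof.
move=> phi0; pose a := - phi 0; pose b := phi d.
have a_gt0 : 0 < a by rewrite oppr_gt0.
(* for this t the chord bound (1 - t) phi 0 + t phi d is at most - t a < 0 *)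
pose t := a / (2 * a + `|b|).
have den_gt0 : 0 < 2 * a + `|b| by rewrite ltr_wpDr // mulr_gt0.
have t_gt0 : 0 < t by rewrite divr_gt0.
have tE : t * (2 * a + `|b|) = a by rewrite divfK // gt_eqF.
have t_le1 : t <= 1 by rewrite ler_pdivrMr // mul1r; have := normr_ge0 b; lra.
have t01 : 0 <= t <= 1 by rewrite (ltW t_gt0).
exists t => //; have := phi_convex 0 d t01.
rewrite scaler0 add0r => /le_lt_trans; apply.
have tb : t * b <= t * `|b| by rewrite ler_wpM2l ?ler_norm // ltW.
have ta : 0 < t * a by rewrite mulr_gt0.
rewrite -/b (_ : phi 0 = - a); last by rewrite opprK.
move: tE; rewrite mulrDr; nra.
Qed.

Lemma convex_neg_segment d t0 t : phi 0 <= 0 -> phi (t0 *: d) < 0 ->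
  0 < t <= t0 -> phi (t *: d) < 0.
Proof.
move=> phi0 phit0 /andP[t_gt0 t_le]; have t0_gt0 := lt_le_trans t_gt0 t_le.
have tt01 : 0 <= t / t0 <= 1.
  by rewrite divr_ge0 ?(ltW t_gt0) ?(ltW t0_gt0) // ler_pdivrMr // mul1r.
have := phi_convex 0 (t0 *: d) tt01.
rewrite scaler0 add0r scalerA divfK ?gt_eqF // => /le_lt_trans; apply.
have : 0 <= 1 - t / t0 by rewrite subr_ge0 ler_pdivrMr // mul1r.
have : 0 < t / t0 by rewrite divr_gt0.
nra.
Qed.

End ConvexFunction.

Lemma le_inf_add {R : realType} (A B : set R) x : A !=set0 -> B !=set0 ->
  (forall a b, A a -> B b -> x <= a + b) -> x <= inf A + inf B.
Proof.
move=> A0 B0 xAB.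
suff : x - inf A <= inf B by lra.
apply: lb_le_inf => // b Bb; suff : x - b <= inf A by lra.
by apply: lb_le_inf => // a Aa; have := xAB a b Aa Bb; lra.
Qed.

Definition norm1 {R : realType} {n : nat} (c : 'rV[R]_n) := \sum_i `|c ord0 i|.

Lemma norm1Z {R : realType} {n : nat} k (c : 'rV[R]_n) : norm1 (k *: c) = `|k| * norm1 c.
Proof. by rewrite /norm1 mulr_sumr; apply: eq_bigr => i _; rewrite mxE normrM. Qed.

Lemma norm1N {R : realType} {n : nat} (c : 'rV[R]_n) : norm1 (- c) = norm1 c.
Proof. by rewrite -scaleN1r norm1Z normrN1 mul1r. Qed.

Lemma norm1_delta {R : realType} {n : nat} (j : 'I_n) :
  norm1 (\row_k (k == j)%:R : 'rV[R]_n) = 1.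
Proof.
rewrite /norm1 (bigD1 j) //= big1 ?addr0 => [|i /negbTE ij]; last by rewrite mxE ij normr0.
by rewrite mxE eqxx normr1.
Qed.

Section Subgradient.
Context {R : realType} {n : nat}.
Variables (phi : 'rV[R]_n -> R) (d : 'rV[R]_n) (L : R).
Hypothesis phi_convex : convex_fun phi.
Hypothesis phi0 : phi 0 = 0.
Hypothesis phi_ray : forall t, 0 < t -> 0 <= phi (t *: d).
Hypothesis phi_le : forall c, phi c <= L * norm1 c.

(* q is a sublinear minorant of phi with q (- d) <= 0; a linear functional below q
   (finite-dimensional Hahn-Banach) is the required subgradient. *)
Let S c := [set y | exists s t, [/\ 0 < s, 0 <= t & y = phi (s *: (c + t *: d)) / s]].
Let q c := inf (S c).

Let S_phi c : S c (phi c).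
Proof. by exists 1, 0; rewrite ltr01 lexx scale0r addr0 scale1r divr1. Qed.

Let phi_ray_ge0 t : 0 <= t -> 0 <= phi (t *: d).
Proof. by rewrite le_eqVlt => /predU1P[<-|/phi_ray//]; rewrite scale0r phi0. Qed.

Let S_lb c : lbound (S c) (- (L * norm1 c)).
Proof.
move=> _ [s [t [s_gt0 t_ge0 ->]]]; rewrite ler_pdivlMr //.
have mid := convex_midpoint phi_convex (s *: (c + t *: d)) (- (s *: c)).
have E : 2^-1 *: (s *: (c + t *: d) + - (s *: c)) = (s * t / 2) *: d.
  by rewrite [s *: (c + _)]scalerDr addrAC subrr add0r !scalerA mulrC.
rewrite E in mid.
have st_ge0 : 0 <= s * t / 2 by rewrite !mulr_ge0 ?(ltW s_gt0) ?invr_ge0 ?ler0n.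
have := phi_ray_ge0 st_ge0.
have := phi_le (- (s *: c)); rewrite norm1N norm1Z gtr0_norm //; lra.
Qed.

Let S_inf c : has_inf (S c).
Proof. by split; [exists (phi c)|exists (- (L * norm1 c))]. Qed.

Let q_le c : q c <= phi c.
Proof. by apply: ge_inf (S_phi c); exact: proj2 (S_inf c). Qed.

Let q_neg_dir : q (- d) <= 0.
Proof.
apply: ge_inf; first exact: proj2 (S_inf _).
by exists 1, 1; rewrite ltr01 ler01 !scale1r addNr phi0 divr1.
Qed.

Let q_subadditive a b : q (a + b) <= q a + q b.
Proof.
apply: le_inf_add; [by exists (phi a)|by exists (phi b)|].
move=> _ _ [s1 [t1 [s1_gt0 t1_ge0 ->]]] [s2 [t2 [s2_gt0 t2_ge0 ->]]].
pose m := Num.min s1 s2.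
have m_gt0 : 0 < m by rewrite lt_min s1_gt0.
have ms1 : m <= s1 by rewrite ge_min lexx.
have ms2 : m <= s2 by rewrite ge_min lexx orbT.
have h1 := convex_slope_le phi_convex (a + t1 *: d) phi0 m_gt0 ms1.
have h2 := convex_slope_le phi_convex (b + t2 *: d) phi0 m_gt0 ms2.
have mid := convex_midpoint phi_convex (m *: (a + t1 *: d)) (m *: (b + t2 *: d)).
have E : 2^-1 *: (m *: (a + t1 *: d) + m *: (b + t2 *: d)) =
    (m / 2) *: (a + b + (t1 + t2) *: d).
  by rewrite -scalerDr scalerA mulrC addrACA -scalerDl.
rewrite E in mid.
have Sab : S (a + b) (phi ((m / 2) *: (a + b + (t1 + t2) *: d)) / (m / 2)).
  by exists (m / 2), (t1 + t2); rewrite divr_gt0 // addr_ge0.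
apply: le_trans (ge_inf (proj2 (S_inf (a + b))) Sab) _.
set A1 := phi (m *: _) in h1 mid; set A2 := phi (m *: _) in h2 mid.
set B := phi _ in mid *.
have -> : B / (m / 2) = (2 * B) / m by rewrite invf_div mulrCA mulrA.
have : (2 * B) / m <= A1 / m + A2 / m.
  by rewrite -mulrDl ler_pM2r ?invr_gt0 //; lra.
lra.
Qed.

Let q_homogeneous (l : R) a : 0 < l -> l * q a <= q (l *: a).
Proof.
move=> l_gt0; apply: lb_le_inf; first by exists (phi (l *: a)).
move=> _ [s [t [s_gt0 t_ge0 ->]]].
have Sa : S a (phi ((s * l) *: (a + (t / l) *: d)) / (s * l)).
  by exists (s * l), (t / l); rewrite mulr_gt0 // divr_ge0 // ltW.
have := ge_inf (proj2 (S_inf a)) Sa; rewrite -(ler_pM2l l_gt0).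
have -> : (s * l) *: (a + (t / l) *: d) = s *: (l *: a + t *: d).
  by apply/rowP => i; rewrite !mxE; field; rewrite gt_eqF.
set V := phi _; suff -> : l * (V / (s * l)) = V / s by [].
by field; rewrite ?mulf_neq0 ?gt_eqF.
Qed.

Lemma exists_subgradient_nonneg_dir :
  exists2 w, forall c, dotv w c <= phi c & 0 <= dotv w d.
Proof.
have [w wq] := sublinear_dominates_linear q_subadditive q_homogeneous.
exists w => [c|]; first exact: le_trans (wq c) (q_le c).
by have := le_trans (wq (- d)) q_neg_dir; rewrite dotvNr oppr_le0.
Qed.

End Subgradient.

Section ConvexFamily.
Context {R : realType} {n : nat} {P : topologicalType}.
Variables (psi : P -> 'rV[R]_n -> R) (L : R).
Hypothesis P_compact : compact [set: P].
Hypothesis psi_continuous : forall c, continuous (psi^~ c).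
Hypothesis psi_convex : forall p, convex_fun (psi p).
Hypothesis psi0_le0 : forall p, psi p 0 <= 0.
Hypothesis psi_max_ge0 : forall c, exists p, 0 <= psi p c.
Hypothesis psi_le : forall p c, psi p c <= L * norm1 c.

Lemma exists_active_nonneg_ray d :
  exists p, psi p 0 = 0 /\ forall t, 0 < t -> 0 <= psi p (t *: d).
Proof.
apply: contrapT => no_active.
have neg_ray p : exists2 t0, 0 < t0 & psi p (t0 *: d) < 0.
  have [p0|] := eqVneq (psi p 0) 0.
    have /existsNP [t /not_implyP [t_gt0 /negP]] :
      ~ (forall t, 0 < t -> 0 <= psi p (t *: d)) by move=> ray; apply: no_active; exists p.
    by rewrite -ltNge; exists t.
  move=> p_neq0; apply: (convex_neg_near0 (psi_convex p)).
  by rewrite lt_neqAle p_neq0 psi0_le0.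
(* by compactness one small t works for all p at once *)
have : \forall t \near 0^'+, [set: P] `<=` (fun p => psi p (t *: d) < 0).
  apply: (proj1 (compact_near_coveringP _) P_compact) => p _.
  have [t0 t0_gt0 psit0] := neg_ray p.
  exists ([set p' | psi p' (t0 *: d) < 0], [set t | 0 < t <= t0]).
    split; first exact: cvgr_lt (@psi_continuous (t0 *: d) p) _ psit0.
    apply: filterS (filterI (nbhs_right_gt 0) (nbhs_right_lt t0_gt0)).
    by move=> t [t_gt0 t_lt]; rewrite /= t_gt0 ltW.
  move=> [p' t] /= [psi't0 t0t].
  exact: (@convex_neg_segment _ _ (psi p') (psi_convex p') d t0 t (psi0_le0 p') psi't0 t0t).
case/filter_ex => t all_neg; have [p psi_ge0] := psi_max_ge0 (t *: d).
by have := all_neg p I; rewrite ltNge psi_ge0.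
Qed.

Let subgrad_set := [set w : 'rV[R]_n |
  exists p, psi p 0 = 0 /\ forall c, dotv w c <= psi p c].

Let subgrad_set_closed : closed subgrad_set.
Proof.
rewrite -[subgrad_set]setCK; apply: open_closedC; rewrite openE => w0 w0_out.
have : \forall w \near w0, [set: P] `<=`
    (fun p => psi p 0 < 0 \/ exists c, psi p c < dotv w c).
  apply: (proj1 (compact_near_coveringP _) P_compact _ (nbhs w0)
    (fun w p => psi p 0 < 0 \/ exists c, psi p c < dotv w c)) => p _.
  have [p0|p0_neq0] := eqVneq (psi p 0) 0; last first.
    have p0_lt0 : psi p 0 < 0 by rewrite lt_neqAle p0_neq0 psi0_le0.
    exists ([set p' | psi p' 0 < 0], [set: 'rV[R]_n]); last by move=> [p' w] [] /=; left.
    by split; [exact: cvgr_lt (@psi_continuous 0 p) _ p0_lt0|exact: filterT].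
  have /existsNP [c /negP] : ~ (forall c, dotv w0 c <= psi p c).
    by move=> w0_sub; apply: w0_out; exists p.
  rewrite -ltNge => psi_lt; pose e := (dotv w0 c - psi p c) / 2.
  have e_gt0 : 0 < e by rewrite divr_gt0 // subr_gt0.
  exists ([set p' | psi p' c < psi p c + e], [set w | dotv w0 c - e < dotv w c]).
    split; first by apply: cvgr_lt (@psi_continuous c p) _ _; rewrite ltrDl.
    by apply: cvgr_gt (@dotv_continuousl R n c w0) _ _; rewrite gtrBl.
  move=> [p' w] /= [psi'_lt dot_gt]; right; exists c.
  have : psi p c + e = dotv w0 c - e by rewrite /e; field.
  lra.
apply: filterS => w near_w [p [p0 w_sub]].
have [|[c]] := near_w p I; first by rewrite p0 ltxx.
by have := w_sub c; lra.
Qed.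

Let subgrad_coord_bound p w (j : 'I_n) : (forall c, dotv w c <= psi p c) ->
  `|w ord0 j| <= `|L|.
Proof.
move=> w_sub; pose e : 'rV[R]_n := \row_k (k == j)%:R.
have := w_sub e; have := w_sub (- e); rewrite dotvNr !dotv_delta => le_neg le_pos.
have := psi_le p e; have := psi_le p (- e); rewrite norm1N norm1_delta mulr1.
by move=> ? ?; apply: le_trans (ler_norm L); rewrite ler_norml; lra.
Qed.

Let subgrad_set_bounded : bounded_set subgrad_set.
Proof.
apply: filterS (nbhs_pinfty_ge (num_real `|L|)) => M LM w [p [_ w_sub]].
change (mx_norm w <= M); rewrite mx_normrE; apply/bigmax_leP; split.
  exact: le_trans LM.
by move=> [i j] _ /=; rewrite ord1; apply: le_trans LM; exact: subgrad_coord_bound.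
Qed.

Let subgrad_set_dir d : exists2 w, subgrad_set w & 0 <= dotv w d.
Proof.
have [p [p0 p_ray]] := exists_active_nonneg_ray d.
have [w w_sub w_dir] := exists_subgradient_nonneg_dir (psi_convex p) p0 p_ray (psi_le p).
by exists w => //; exists p.
Qed.

Theorem convex_family_certificate :
  exists (lam : 'I_n.+1 -> R) (ps : 'I_n.+1 -> P),
  [/\ forall i, 0 <= lam i, \sum_i lam i = 1, forall i, psi (ps i) 0 = 0 &
      forall c, 0 <= \sum_i lam i * psi (ps i) c].
Proof.
have [w0 W_w0 _] := subgrad_set_dir 0.
have W_compact := bounded_closed_compact subgrad_set_bounded subgrad_set_closed.
have [lam [ws [lam_ge0 lam1 Wws sum0]]] :=
  gordan W_compact (ex_intro _ w0 W_w0) subgrad_set_dir.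
have [ps ps_sub] := choice Wws.
exists lam, ps; split => // [i|c]; first by case: (ps_sub i).
apply: le_trans (ler_sum _ (fun i _ => ler_wpM2l (lam_ge0 i) (proj2 (ps_sub i) c))).
suff -> : \sum_i lam i * dotv (ws i) c = 0 by [].
by rewrite -[RHS](dotv0l c) sum0 dotv_suml; apply: eq_bigr => i _; rewrite dotvZl.
Qed.

End ConvexFamily.

Lemma compact_locally_bounded {R : realType} (T : topologicalType) (phi : T -> R) :
  compact [set: T] -> (forall x0 : T, exists B, \forall x \near x0, phi x <= B) ->
  exists M, forall x, phi x <= M.
Proof.
move=> cT loc_bound.
have : \forall M \near +oo, [set: T] `<=` (fun x => phi x <= M).
  apply: (proj1 (compact_near_coveringP _) cT _ +oo (fun M x => phi x <= M)) => x0 _.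
  have [B near_B] := loc_bound x0.
  exists ([set x | phi x <= B], [set M | B <= M]).
    by split => //=; exact: nbhs_pinfty_ge (num_real B).
  by move=> [x M] /= [phix BM]; exact: le_trans BM.
by case/filter_ex => M M_ub; exists M => x; exact: M_ub.
Qed.

Lemma continuous_norm_bounded {R : realType} (T : topologicalType) (Y : normedModType R)
    (r : T -> Y) :
  compact [set: T] -> continuous r -> exists M, forall x, `|r x| <= M.
Proof.
move=> cT rc.
have /compact_bounded [N [_ N_ub]] := continuous_compact (continuous_subspaceT rc) cT.
by exists (N + 1) => x; apply: (N_ub (N + 1)); [rewrite ltrDl|exists x].
Qed.

Section UniformNorm.
Context {R : realType} {X : topologicalType} {Y : normedModType R}.

Lemma norm_le_unorm (r : X -> Y) : (exists M, forall x, `|r x| <= M) ->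
  forall x, `|r x| <= unorm r.
Proof.
move=> [M rM] x; apply: ub_le_sup; last by exists x.
by exists M => _ [y _ <-].
Qed.

Lemma unorm_le (r : X -> Y) M : [set: X] !=set0 -> (forall x, `|r x| <= M) -> unorm r <= M.
Proof.
move=> [x0 _] rM; apply: ge_sup; first by exists `|r x0|, x0.
by move=> _ [y _ <-].
Qed.

End UniformNorm.

Lemma positive_support {R : realType} m (lam : 'I_m -> R) :
  (forall i, 0 <= lam i) -> \sum_i lam i = 1 ->
  exists k (e : 'I_k -> 'I_m), [/\ (1 <= k <= m)%N, forall j, 0 < lam (e j),
    \sum_(j < k) lam (e j) = 1 &
    forall F : 'I_m -> R, \sum_(j < k) lam (e j) * F (e j) = \sum_i lam i * F i].
Proof.
move=> lam_ge0 lam1; pose S : {set 'I_m} := [set i | 0 < lam i]%SET.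
have lam_out i : i \notin S -> lam i = 0.
  by rewrite /S inE -leNgt => lam_le0; apply/eqP; rewrite eq_le lam_le0 lam_ge0.
have sum_S F : \sum_(j < #|S|) lam (enum_val j) * F (enum_val j) = \sum_i lam i * F i.
  rewrite -(big_enum_val (A := mem S) (fun i => lam i * F i)) big_mkcond /=.
  by apply: eq_bigr => i _; case: ifP => // /negbT /lam_out ->; rewrite mul0r.
exists #|S|, enum_val; split => //.
- apply/andP; split; last by rewrite -[X in (_ <= X)%N](card_ord m) max_card.
  rewrite card_gt0; apply: contra_eqN lam1 => /eqP S0.
  rewrite big1 => [|i _]; first by rewrite eq_sym oner_neq0.
  by apply: lam_out; rewrite S0 inE.
- by move=> j; have := enum_valP j; rewrite /S inE.
- rewrite -lam1; have := sum_S (fun _ => 1).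
  by under eq_bigr do rewrite mulr1; under [X in _ = X -> _]eq_bigr do rewrite mulr1.
Qed.

Lemma affine_combination_sub {R : numDomainType} (V : lmodType R) (y a b : V) (s : R) :
  y - ((1 - s) *: a + s *: b) = (1 - s) *: (y - a) + s *: (y - b).
Proof.
by rewrite !scalerBr addrACA -opprD -scalerDl subrK scale1r.
Qed.

Section BestSimultaneousApproximation.
Context {R : realType} {X A : topologicalType} {Y : normedModType R}.
Variable f : A -> X -> Y.
Hypothesis X_compact : compact [set: X].
Hypothesis A_compact : compact [set: A].
Hypothesis X_ne : [set: X] !=set0.
Hypothesis A_ne : [set: A] !=set0.
Hypothesis f_continuous : forall a, continuous (f a).
Hypothesis f_ucontinuous : forall (a : A) (e : R), 0 < e ->
  \forall b \near a, unorm (fun x => f b x - f a x) < e.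

Lemma dev_bounded (h : X -> Y) a : continuous h -> exists M, forall x, `|f a x - h x| <= M.
Proof.
move=> hc; apply: continuous_norm_bounded X_compact _ => x.
by apply: cvgB; [exact: f_continuous|exact: hc].
Qed.

Lemma norm_le_unorm_dev (h : X -> Y) a x : continuous h ->
  `|f a x - h x| <= unorm (fun x => f a x - h x).
Proof.
by move=> hc; apply: (norm_le_unorm (r := fun x => f a x - h x)); exact: dev_bounded.
Qed.

Lemma unorm_dev_le (h : X -> Y) a0 a : continuous h ->
  unorm (fun x => f a x - h x) <=
  unorm (fun x => f a x - f a0 x) + unorm (fun x => f a0 x - h x).
Proof.
move=> hc; apply: (unorm_le X_ne) => x.
have -> : f a x - h x = (f a x - f a0 x) + (f a0 x - h x) by rewrite addrA subrK.
apply: le_trans (ler_normD _ _) _.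
by apply: lerD; apply: norm_le_unorm_dev.
Qed.

Lemma unorm_dev_bounded (h : X -> Y) : continuous h ->
  exists M, forall a, unorm (fun x => f a x - h x) <= M.
Proof.
move=> hc; apply: compact_locally_bounded A_compact _ => a0.
exists (1 + unorm (fun x => f a0 x - h x)).
apply: filterS (f_ucontinuous a0 ltr01) => a near_a.
by have := unorm_dev_le a0 a hc; lra.
Qed.

Lemma unorm_le_sdev (h : X -> Y) a : continuous h -> unorm (fun x => f a x - h x) <= sdev f h.
Proof.
move=> hc; have [M M_ub] := unorm_dev_bounded hc.
by apply: ub_le_sup; [exists M => _ [b _ <-]|exists a].
Qed.

Lemma norm_le_sdev (h : X -> Y) a x : continuous h -> `|f a x - h x| <= sdev f h.
Proof.
by move=> hc; apply: le_trans (unorm_le_sdev a hc); exact: norm_le_unorm_dev.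
Qed.

Lemma sdev_le (h : X -> Y) M : (forall a x, `|f a x - h x| <= M) -> sdev f h <= M.
Proof.
move=> M_ub; have [a0 _] := A_ne.
apply: ge_sup; first by exists (unorm (fun x => f a0 x - h x)), a0.
by move=> _ [a _ <-]; apply: unorm_le.
Qed.

Lemma dev_continuous (h : X -> Y) : continuous h ->
  continuous (fun p : A * X => f p.1 p.2 - h p.2).
Proof.
move=> hc [a0 x0]; apply/cvgrPdist_lt => e e_gt0.
have e3_gt0 : 0 < e / 3 by rewrite divr_gt0.
have near_f := (proj1 (cvgrPdist_lt _ _) (@f_continuous a0 x0)) _ e3_gt0.
have near_h := (proj1 (cvgrPdist_lt _ _) (@hc x0)) _ e3_gt0.
exists ([set a | unorm (fun x => f a x - f a0 x) < e / 3],
        [set x | `|f a0 x0 - f a0 x| < e / 3 /\ `|h x0 - h x| < e / 3]).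
  split=> /=; first exact: f_ucontinuous.
  have near_fh := @filterI X (nbhs x0) (nbhs_filter x0) _ _
    (near_f (nbhs_filter x0)) (near_h (nbhs_filter x0)).
  by apply: (@filterS X (nbhs x0) (nbhs_filter x0) _ _ _ near_fh) => x [? ?]; split.
move=> [a x] /= [near_a [near_fx near_hx]].
have fa := norm_le_unorm_dev a x (@f_continuous a0).
have -> : f a0 x0 - h x0 - (f a x - h x) =
    (f a0 x0 - f a0 x) - (f a x - f a0 x) - (h x0 - h x).
  by rewrite !opprB subrKA [LHS]addrACA [RHS]addrACA (addrC (- h x0)).
apply: le_lt_trans (ler_normB _ _) _.
have := ler_normB (f a0 x0 - f a0 x) (f a x - f a0 x); lra.
Qed.

Variables (n : nat) (g : 'I_n -> X -> Y) (fstar : X -> Y).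
Hypothesis g_continuous : forall i, continuous (g i).
Hypothesis fstar_span : inSpan g fstar.

Definition best_certificate (k : nat) (as_ : 'I_k -> A) (xs : 'I_k -> X) (lam : 'I_k -> R) :=
  (forall i, 0 < lam i) /\ \sum_(i < k) lam i = 1 /\
  (forall h, inSpan g h ->
     \sum_(i < k) lam i * `|f (as_ i) (xs i) - fstar (xs i)|
     <= \sum_(i < k) lam i * `|f (as_ i) (xs i) - h (xs i)|) /\
  (forall i, `|f (as_ i) (xs i) - fstar (xs i)| = unorm (fun x => f (as_ i) x - fstar x) /\
             unorm (fun x => f (as_ i) x - fstar x) = sdev f fstar).

Lemma inSpan_continuous h : inSpan g h -> continuous h.
Proof.
move=> [c ->]; apply: continuous_sum => i x.
by apply: continuousZ; [exact: cst_continuous|exact: g_continuous].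
Qed.

Lemma best_certificate_sufficient k (as_ : 'I_k -> A) xs lam : best_certificate as_ xs lam ->
  forall h, inSpan g h -> sdev f fstar <= sdev f h.
Proof.
move=> [lam_gt0 [lam1 [lam_opt lam_peak]]] h h_span.
have -> : sdev f fstar = \sum_i lam i * `|f (as_ i) (xs i) - fstar (xs i)|.
  under eq_bigr do rewrite (proj1 (lam_peak _)) (proj2 (lam_peak _)).
  by rewrite -mulr_suml lam1 mul1r.
apply: le_trans (lam_opt h h_span) _.
rewrite -[X in _ <= X]mul1r -lam1 mulr_suml; apply: ler_sum => i _.
rewrite ler_wpM2l ?(ltW (lam_gt0 i)) //.
exact: norm_le_sdev _ _ (inSpan_continuous h_span).
Qed.

Definition comb (c : 'rV[R]_n) x : Y := \sum_i c ord0 i *: g i x.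

Let approx c x := fstar x + comb c x.

Lemma inSpan_approx c : inSpan g (approx c).
Proof.
have [cs fstarE] := fstar_span; exists (fun i => cs i + c ord0 i); apply/funext => x.
by rewrite /approx fstarE /comb -big_split; apply: eq_bigr => i _; rewrite scalerDl.
Qed.

Lemma inSpan_approxP h : inSpan g h -> exists c, h = approx c.
Proof.
move=> [ch ->]; have [cs fstarE] := fstar_span.
exists (\row_i (ch i - cs i)); apply/funext => x; rewrite /approx fstarE /comb -big_split.
by apply: eq_bigr => i _; rewrite /= mxE scalerBl subrKC.
Qed.

Lemma combD c c' x : comb (c + c') x = comb c x + comb c' x.
Proof. by rewrite /comb -big_split; apply: eq_bigr => i _; rewrite /= mxE scalerDl. Qed.

Lemma combZ k c x : comb (k *: c) x = k *: comb c x.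
Proof. by rewrite /comb scaler_sumr; apply: eq_bigr => i _; rewrite mxE scalerA. Qed.

Lemma approx_convex a b s x :
  approx ((1 - s) *: a + s *: b) x = (1 - s) *: approx a x + s *: approx b x.
Proof. by rewrite /approx combD !combZ !scalerDr addrACA -scalerDl subrK scale1r. Qed.

Lemma approx0 : approx 0 = fstar.
Proof.
by apply/funext => x; rewrite /approx /comb big1 ?addr0 // => i _; rewrite mxE scale0r.
Qed.

Lemma g_bounded : exists M, forall i x, `|g i x| <= M.
Proof.
have /choice [M M_ub] : forall i, exists M, forall x, `|g i x| <= M.
  by move=> i; exact: continuous_norm_bounded X_compact (@g_continuous i).
exists (\sum_i `|M i|) => i x; apply: le_trans (M_ub i x) _.
apply: le_trans (ler_norm _) _; rewrite (bigD1 i) //= lerDl.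
by apply: sumr_ge0 => j _.
Qed.

Lemma comb_norm_le M c x : (forall i x, `|g i x| <= M) -> `|comb c x| <= M * norm1 c.
Proof.
move=> M_ub; apply: le_trans (ler_norm_sum _ _ _) _.
rewrite /norm1 mulr_sumr; apply: ler_sum => i _.
by rewrite normrZ mulrC ler_wpM2r.
Qed.

Let psi (p : A * X) c := `|f p.1 p.2 - approx c p.2| - sdev f fstar.

Let psi_continuous c : continuous (psi^~ c).
Proof.
move=> p; apply: cvgB; last exact: cvg_cst.
have dev_cont := dev_continuous (inSpan_continuous (inSpan_approx c)).
exact: continuous_comp (dev_cont p) (@norm_continuous _ _ _).
Qed.

Let psi_convex p : convex_fun (psi p).
Proof.
move=> a b s /andP[s_ge0 s_le1]; rewrite /psi approx_convex affine_combination_sub.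
apply: le_trans (lerB (ler_normD _ _) (lexx _)) _.
by rewrite !normrZ !ger0_norm ?subr_ge0 //; lra.
Qed.

Let psi0_le0 p : psi p 0 <= 0.
Proof.
rewrite /psi approx0 subr_le0.
exact: norm_le_sdev _ _ (inSpan_continuous fstar_span).
Qed.

Let psi_le M : (forall i x, `|g i x| <= M) -> forall p c, psi p c <= M * norm1 c.
Proof.
move=> M_ub [a x] c; rewrite /psi /approx /=.
have := norm_le_sdev a x (inSpan_continuous fstar_span).
have := ler_normB (f a x - fstar x) (comb c x); rewrite opprD addrA.
have := comb_norm_le c x M_ub; lra.
Qed.

Let AX_compact : compact [set: A * X].
Proof. by rewrite -setXTT; exact: compact_setX. Qed.

Let psi_max_ge0 : (forall h, inSpan g h -> sdev f fstar <= sdev f h) ->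
  forall c, exists p, 0 <= psi p c.
Proof.
move=> best c; have [[a0 _] [x0 _]] := (A_ne, X_ne).
have [p _ p_max] := compact_EVT_max (ex_intro _ (a0, x0) I) AX_compact
  (continuous_subspaceT (@psi_continuous c)).
exists p; rewrite /psi subr_ge0; apply: le_trans (best _ (inSpan_approx c)) _.
apply: sdev_le => a x; have := p_max (a, x); rewrite inE /psi => /(_ I); lra.
Qed.

Lemma best_certificate_necessary : (forall h, inSpan g h -> sdev f fstar <= sdev f h) ->
  exists k, (1 <= k <= n.+1)%N /\ exists (as_ : 'I_k -> A) xs lam, best_certificate as_ xs lam.
Proof.
move=> best; have [M M_ub] := g_bounded.
have [lam0 [ps [lam0_ge0 lam01 active cert]]] := convex_family_certificate AX_compact
  psi_continuous psi_convex psi0_le0 (psi_max_ge0 best) (psi_le M_ub).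
have [k [e [k_bound lam_gt0 lam1 sum_e]]] := positive_support lam0_ge0 lam01.
have peak i : `|f (ps i).1 (ps i).2 - fstar (ps i).2| = sdev f fstar.
  by have := active i; rewrite /psi approx0; lra.
exists k; split => //.
exists (fun j => (ps (e j)).1), (fun j => (ps (e j)).2), (fun j => lam0 (e j)).
do 2 split => //; split=> [h /inSpan_approxP [c ->]|j].
  rewrite (sum_e (fun i => `|f (ps i).1 (ps i).2 - fstar (ps i).2|)).
  rewrite (sum_e (fun i => `|f (ps i).1 (ps i).2 - approx c (ps i).2|)).
  under eq_bigr do rewrite peak; rewrite -mulr_suml lam01 mul1r.
  have := cert c; rewrite /psi; under eq_bigr do rewrite mulrBr.
  by rewrite sumrB -mulr_suml lam01 mul1r subr_ge0.
have fstar_cont := inSpan_continuous fstar_span.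
have le_unorm := norm_le_unorm_dev (ps (e j)).1 (ps (e j)).2 fstar_cont.
have unorm_le := unorm_le_sdev (ps (e j)).1 fstar_cont.
rewrite /= peak in le_unorm *.
suff -> : unorm (fun x => f (ps (e j)).1 x - fstar x) = sdev f fstar by [].
by apply/eqP; rewrite eq_le unorm_le.
Qed.

End BestSimultaneousApproximation.

Lemma lin_indep_domain_nonempty {R : realType} {X : Type} {Y : normedModType R} {n : nat}
    (g : 'I_n -> X -> Y) :
  (0 < n)%N -> lin_indep g -> [set: X] !=set0.
Proof.
move=> n_gt0 g_indep; apply: contrapT => X_empty.
have /eqP := g_indep (fun=> 1)
  (fun x => False_ind _ (X_empty (ex_intro _ x I))) (Ordinal n_gt0).
by rewrite oner_eq0.
Qed.

Theorem theorem2 (R : realType) (X : topologicalType) (Y : normedModType R)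
  (A : topologicalType) (n : nat) (g : 'I_n -> X -> Y) (f : A -> X -> Y)
  (fstar : X -> Y) :
  compact [set: X] -> hausdorff_space X ->
  compact [set: A] -> hausdorff_space A -> (exists a : A, True) ->
  (0 < n)%N -> (forall i, continuous (g i)) -> lin_indep g ->
  (forall a, continuous (f a)) ->
  (forall (a : A) (e : R), 0 < e ->
     \forall b \near a, unorm (fun x => f b x - f a x) < e) ->
  inSpan g fstar ->
  ((forall h, inSpan g h -> sdev f fstar <= sdev f h) <->
   exists k : nat, (1 <= k <= n.+1)%N /\
     exists (as_ : 'I_k -> A) (xs : 'I_k -> X) (lam : 'I_k -> R),
       (forall i, 0 < lam i) /\ \sum_(i < k) lam i = 1 /\
       (forall h, inSpan g h ->
          \sum_(i < k) lam i * `|f (as_ i) (xs i) - fstar (xs i)|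
          <= \sum_(i < k) lam i * `|f (as_ i) (xs i) - h (xs i)|) /\
       (forall i, `|f (as_ i) (xs i) - fstar (xs i)|
                    = unorm (fun x => f (as_ i) x - fstar x) /\
                  unorm (fun x => f (as_ i) x - fstar x) = sdev f fstar)).
Proof.
move=> X_compact _ A_compact _ A_ne n_gt0 g_continuous g_indep f_continuous f_ucontinuous
  fstar_span.
have X_ne := lin_indep_domain_nonempty n_gt0 g_indep.
split; first exact: best_certificate_necessary.
by move=> [k [_ [as_ [xs [lam cert]]]]]; exact: best_certificate_sufficient cert.
Qed.
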